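(* For every pair of positive integers $g,k$, there is a graph $G_{g,k}$ with girth at least $g$ and chromatic number at least $k$ that has a proper edge-colouring in which each cycle contains no colour exactly once.
   Context: A proper edge-colouring assigns colours to edges so that edges sharing a vertex receive distinct colours. ''Each cycle contains no colour exactly once'' means: for every cycle $C$ of the graph and every colour $c$, the number of edges of $C$ with colour $c$ is not equal to $1$. Graphs are finite and simple. *)

From mathcomp Require Import all_boot.
Set Implicit Arguments. Unset Strict Implicit. Unset Printing Implicit Defensive.

Definition simple_graph (T : finType) (e : rel T) : Prop :=
  symmetric e /\ irreflexive e.

Definition is_graph_cycle (T : finType) (e : rel T) (p : seq T) : Prop :=
  [/\ 3 <= size p, uniq p & cycle e p].

Definition girth_ge (T : finType) (e : rel T) (g : nat) : Prop :=
  forall p : seq T, is_graph_cycle e p -> g <= size p.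

Definition proper_vcolouring (T : finType) (e : rel T) (m : nat) (f : T -> 'I_m) : Prop :=
  forall x y, e x y -> f x != f y.

Definition chromatic_ge (T : finType) (e : rel T) (k : nat) : Prop :=
  forall m (f : T -> 'I_m), proper_vcolouring e f -> k <= m.

Definition proper_ecolouring (T : finType) (e : rel T) (c : T -> T -> nat) : Prop :=
  (forall x y, e x y -> c x y = c y x) /\
  (forall x y z, e x y -> e x z -> y != z -> c x y != c x z).

Definition cycle_colour_count (T : finType) (c : T -> T -> nat) (p : seq T) (col : nat) : nat :=
  count (fun x => c x (next p x) == col) p.

Definition no_unique_colour_on_cycles (T : finType) (e : rel T) (c : T -> T -> nat) : Prop :=
  forall p : seq T, is_graph_cycle e p -> forall col : nat, cycle_colour_count c p col != 1.

From mathcomp Require Import all_boot zify.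
Set Implicit Arguments. Unset Strict Implicit. Unset Printing Implicit Defensive.

(* Deletion method in the Hamming graph on [word m n = 'I_n ^ 'I_m]: two words are
   adjacent when they differ in exactly one coordinate, and the edge is coloured by that
   coordinate.  Along a closed walk every coordinate returns to its initial value, so it
   cannot change exactly once: in any subgraph, no cycle sees a colour exactly once.

   Keep each edge with probability [1 / Q.+1] and delete the vertices that lie on a short
   kept cycle or at the centre of two kept edges of the same colour; what survives has
   girth at least [g] and the colouring becomes proper.  In each direction, all but at
   most [n ^ (m - 1)] words of a set [S] have a neighbour in [S] along that direction, so
   a set of [2 n ^ (m - 1)] words spans at least [m n ^ (m - 1) / 2] Hamming edges and,
   for [m = 4 n Q.+1], is independent only with tiny probability.  With [n = 4 k] some
   sample deletes fewer than half of the [n ^ m] words and leaves no independent set of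
   size [2 n ^ (m - 1)], which forces chromatic number at least [k].  Probabilities are
   counts of samples [r], functions from vertex pairs to ['I_Q.+1], an edge being kept
   when [r] maps its key to [0]. *)

Lemma card_set_sumb (T : finType) (P : pred T) : #|[set x | P x]| = \sum_x P x.
Proof. by rewrite -sum1dep_card big_mkcond; apply: eq_bigr => x _; case: (P x). Qed.

Lemma double_count (R W : finType) (P : R -> W -> bool) :
  \sum_r #|[set w | P r w]| = \sum_w #|[set r | P r w]|.
Proof.
under eq_bigr => r _ do rewrite card_set_sumb.
by rewrite exchange_big; apply: eq_bigr => w _; rewrite card_set_sumb.
Qed.

Lemma card_set_pair (A B : finType) (P : A -> B -> bool) :
  #|[set ab : A * B | P ab.1 ab.2]| = \sum_b #|[set a | P a b]|.
Proof.
rewrite card_set_sumb -(pair_big xpredT xpredT (fun a b => (P a b : nat))) /=.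
by rewrite exchange_big; apply: eq_bigr => b _; rewrite card_set_sumb.
Qed.

Lemma card_fibres (T : finType) k (f : T -> 'I_k) :
  #|T| = \sum_i #|[set x | f x == i]|.
Proof.
under eq_bigr => i _ do rewrite card_set_sumb.
rewrite exchange_big -sum1_card; apply: eq_bigr => x _.
by rewrite (bigD1 (f x)) //= eqxx big1 // => i /negbTE; rewrite eq_sym => ->.
Qed.

Lemma card_set_exists_le (A B : finType) (P : A -> B -> bool) :
  #|[set b | [exists a, P a b]]| <= \sum_a #|[set b | P a b]|.
Proof.
rewrite double_count card_set_sumb; apply: leq_sum => b _.
case: existsP => [[a Hab]|] //=.
by rewrite (cardD1 a) inE Hab.
Qed.

Lemma card_geq_le_sum (T : finType) (f : T -> nat) t :
  t * #|[set x | t <= f x]| <= \sum_x f x.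
Proof.
rewrite card_set_sumb big_distrr; apply: leq_sum => x _.
by case: (leqP t (f x)) => [le_t_fx | _]; rewrite /= ?muln1 ?muln0.
Qed.

Lemma card_sets (T : finType) : #|{: {set T}}| = 2 ^ #|T|.
Proof.
rewrite -cardsT -card_powerset; apply: eq_card => A.
by rewrite powersetE subsetT inE.
Qed.

Lemma card_ffun_restricted (aT rT : finType) (K : {pred aT}) (P : {pred rT}) :
  #|[set f : {ffun aT -> rT} | [forall a in K, P (f a)]]|
   = #|P| ^ #|K| * #|rT| ^ (#|aT| - #|K|).
Proof.
pose F a := if a \in K then (P : pred rT) else predT.
have -> : #|[set f : {ffun aT -> rT} | [forall a in K, P (f a)]]| = #|family F|.
  apply: eq_card => f; rewrite inE; apply/forallP/familyP => H a;
    by have := H a; rewrite /F; case: (a \in K).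
rewrite card_family foldrE big_image /= (bigID (mem K)) /=.
rewrite (eq_bigr (fun _ => #|P|)); last by move=> a Ka; rewrite /F Ka.
rewrite [X in _ * X](eq_bigr (fun _ => #|rT|)); last first.
  by move=> a /negbTE Ka; rewrite /F Ka; apply: eq_card.
by rewrite !prod_nat_const -(cardC K) addKn.
Qed.

Lemma card_ffun_pinned (A : finType) Q (ks : seq A) : uniq ks ->
  #|[set r : {ffun A -> 'I_Q.+1} | all (fun a => r a == ord0) ks]|
   = Q.+1 ^ (#|A| - size ks).
Proof.
move=> uks; rewrite -(card_uniqP uks).
have := card_ffun_restricted (mem ks) (pred1 (@ord0 Q)).
rewrite card1 exp1n mul1n card_ord => <-.
by apply: eq_card => r; rewrite !inE; apply/allP/forall_inP.
Qed.

Lemma leq_wexp2r a b e : a <= b -> a ^ e <= b ^ e.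
Proof. by move=> leab; elim: e => // e IH; rewrite !expnS leq_mul. Qed.

Lemma bernoulli_nat a e : a ^ e * (a + e) <= a.+1 ^ e * a.
Proof.
elim: e => [|e IH]; first by rewrite !expn0 addn0.
rewrite !expnS; apply: (@leq_trans (a ^ e * (a + e) * a.+1)).
  by move: (a ^ e) => b; nia.
by apply: leq_trans (leq_mul IH (leqnn a.+1)) _; nia.
Qed.

Lemma two_le_pow_succ a : 0 < a -> 2 * a ^ a <= a.+1 ^ a.
Proof.
move=> a_gt0; have := bernoulli_nat a a.
move: (a ^ a) (a.+1 ^ a) => b c H.
by rewrite -(leq_pmul2r a_gt0); nia.
Qed.

Lemma mixed_pow_antimono Q E E' A : E <= E' -> E' <= A ->
  Q ^ E' * Q.+1 ^ (A - E') <= Q ^ E * Q.+1 ^ (A - E).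
Proof.
move=> leEE' leE'A.
have -> : A - E = (E' - E) + (A - E') by lia.
rewrite -(subnKC leEE') expnD -mulnA leq_mul2l; apply/orP; right.
rewrite expnD leq_mul2r addKn; apply/orP; right.
exact: leq_wexp2r.
Qed.

Lemma mixed_pow_small Q N E A : 0 < Q -> Q * N.+1 <= E -> E <= A ->
  2 ^ N.+1 * (Q ^ E * Q.+1 ^ (A - E)) <= Q.+1 ^ A.
Proof.
move=> Q_gt0 leQNE leEA.
rewrite -{2}(subnKC leEA) expnD mulnA leq_mul2r; apply/orP; right.
rewrite -(subnKC leQNE) !expnD mulnA; apply: leq_mul; last exact: leq_wexp2r.
by rewrite mulnC expnM -expnMn expnM; apply: leq_wexp2r; rewrite mulnC two_le_pow_succ.
Qed.

Section Cycles.

Variable T : eqType.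
Implicit Types (p s : seq T) (x y : T).

Lemma next_next_neq p x : uniq p -> 3 <= size p -> x \in p -> next p (next p x) != x.
Proof.
move=> up p_ge3 /rot_to[i s rot_p].
rewrite -!(next_rot i up); move: up p_ge3.
rewrite -(rot_uniq i) -(size_rot i) rot_p {rot_p}; case: s => [|y [|z s]] //=.
rewrite !inE !negb_or => /and3P[/and3P[nxy nxz _] /andP[nyz _] _] _.
by rewrite eqxx (eq_sym y x) (negbTE nxy) eqxx eq_sym.
Qed.

Variables (U : eqType) (h : T -> U).

Lemma walk_changes y s :
  let changes := count id (pairmap (fun a b => h a != h b) y s) in
  (changes == 0 -> h y = h (last y s)) /\ (changes == 1 -> h y != h (last y s)).
Proof.
elim: s y => [|z s IH] y //=; have [IH0 IH1] := IH z.
case: (eqVneq (h y) (h z)) => [->|nyz] //=.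
by split=> // /eqP[] /eqP /IH0 <-.
Qed.

Lemma pairmap_fpath (V : Type) (F : T -> T -> V) (f : T -> T) z s :
  fpath f z s -> pairmap F z s = map (fun x => F x (f x)) (belast z s).
Proof. by elim: s z => [|w s IH] z //= /andP[/eqP <- /IH ->]. Qed.

Lemma cycle_changes_neq1 p : uniq p -> count (fun x => h x != h (next p x)) p != 1.
Proof.
case: p => [|y s] // up.
have -> : count (fun x => h x != h (next (y :: s) x)) (y :: s)
        = count id (pairmap (fun a b => h a != h b) y (rcons s y)).
  by rewrite (pairmap_fpath _ (cycle_next up)) belast_rcons count_map.
apply/eqP => /eqP one_change.
by have [_ /(_ one_change)] := walk_changes y (rcons s y); rewrite last_rcons eqxx.
Qed.

End Cycles.

Section GraphEmbedding.

Variables (T U : finType) (f : T -> U) (e : rel T) (e' : rel U).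
Hypotheses (f_inj : injective f) (f_homo : {homo f : x y / e x y >-> e' x y}).

Lemma graph_cycle_map p : is_graph_cycle e p -> is_graph_cycle e' (map f p).
Proof.
case=> p_ge3 up cyc; split; rewrite ?size_map ?map_inj_uniq // cycle_map.
exact: sub_cycle cyc.
Qed.

Lemma no_unique_colour_map c : no_unique_colour_on_cycles e' c ->
  no_unique_colour_on_cycles e (fun x y => c (f x) (f y)).
Proof.
move=> no_unique p cyc col; have [_ up _] := cyc.
have := no_unique _ (graph_cycle_map cyc) col.
by rewrite /cycle_colour_count count_map (eq_count (a2 := fun x => c (f x) (f (next p x)) == col))
  // => x /=; rewrite (next_map f_inj up).
Qed.

End GraphEmbedding.

Lemma chromatic_ge_indep (T : finType) (e : rel T) k a :
  (forall S : {set T}, {in S &, forall x y, ~~ e x y} -> #|S| < a) ->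
  k.-1 * a < #|T| -> chromatic_ge e k.
Proof.
move=> indep_small T_large c f f_proper; rewrite leqNgt; apply/negP => c_lt.
have class_small i : #|[set x | f x == i]| <= a.
  apply/ltnW/indep_small => x y; rewrite !inE => /eqP fx /eqP fy.
  by apply/negP => /f_proper; rewrite fx fy eqxx.
have : #|T| <= c * a.
  have -> : c * a = \sum_(i < c) a by rewrite sum_nat_const card_ord.
  by rewrite (card_fibres f); apply: leq_sum => i _.
by move: T_large; nia.
Qed.

Section EdgeKeys.

Variable T : finType.
Implicit Types (x y : T) (p : seq T).

Definition rank_lt x y := enum_rank x < enum_rank y.

Definition edge_key x y : T * T := if rank_lt x y then (x, y) else (y, x).

Lemma rank_lt_total x y : x != y -> rank_lt x y || rank_lt y x.
Proof.
move=> nxy; rewrite /rank_lt; case: ltngtP => // /val_inj/enum_rank_inj exy.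
by rewrite exy eqxx in nxy.
Qed.

Lemma edge_keyC x y : edge_key x y = edge_key y x.
Proof.
rewrite /edge_key /rank_lt.
by case: ltngtP => // /val_inj/enum_rank_inj ->.
Qed.

Lemma edge_key_inj x y x' y' :
  edge_key x y = edge_key x' y' -> (x = x' /\ y = y') \/ (x = y' /\ y = x').
Proof. by rewrite /edge_key; do 2 case: ifP => _; case=> -> ->; [left|right|right|left]. Qed.

Definition cycle_keys p := [seq edge_key x (next p x) | x <- p].

Lemma cycle_keys_uniq p : uniq p -> 3 <= size p -> uniq (cycle_keys p).
Proof.
move=> up p_ge3; rewrite map_inj_in_uniq // => x x' xp x'p.
case/edge_key_inj => [[] // | [-> nxx']].
by have := next_next_neq up p_ge3 x'p; rewrite nxx' eqxx.
Qed.

End EdgeKeys.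

Notation word m n := {ffun 'I_m -> 'I_n}.

Section HammingGraph.

Variables m n : nat.
Implicit Types x y z : word m n.

Definition hamming_adj x y :=
  [exists i, (x i != y i) && [forall j, (x j != y j) ==> (j == i)]].

Definition set_coord x (ia : 'I_m * 'I_n) : word m n :=
  [ffun j => if j == ia.1 then ia.2 else x j].

(* [m] is a junk value: it is never a direction of an edge. *)
Definition hamming_dir x y : nat :=
  if [pick i | x i != y i] is Some i then val i else m.

Lemma hamming_adjC : symmetric hamming_adj.
Proof.
move=> x y; apply/existsP/existsP => -[i /andP[xyi /forallP xy_only_i]];
  exists i; rewrite eq_sym xyi; apply/forallP => j; rewrite eq_sym; exact: xy_only_i.
Qed.

Lemma hamming_adj_irr : irreflexive hamming_adj.
Proof. by move=> x; apply/negbTE/existsP => -[i]; rewrite eqxx. Qed.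

Lemma hamming_adjP x y : hamming_adj x y ->
  exists i, [/\ x i != y i, y = set_coord x (i, y i) & forall j, x j != y j -> j = i].
Proof.
move=> /existsP[i /andP[xyi /forallP xy_only_i]].
have only_i j : x j != y j -> j = i by move=> xyj; have := xy_only_i j; rewrite xyj => /eqP.
exists i; split=> //; apply/ffunP => j; rewrite ffunE.
by case: eqVneq => [-> // | nji]; apply/eqP; apply: contraR nji; rewrite eq_sym => /only_i ->.
Qed.

Lemma hamming_dirC x y : hamming_dir x y = hamming_dir y x.
Proof. by rewrite /hamming_dir (eq_pick (Q := fun i => y i != x i)) // => i; rewrite eq_sym. Qed.

Lemma hamming_dirE x y (i : 'I_m) : hamming_adj x y ->
  (hamming_dir x y == i) = (x i != y i).
Proof.
case/hamming_adjP=> c [xyc _ only_c]; rewrite /hamming_dir.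
case: pickP => [j /= /only_c -> | /(_ c)]; last by rewrite xyc.
case: (eqVneq i c) => [-> | nic]; first by rewrite eqxx xyc.
have -> : x i == y i by apply: contraR nic => /only_c ->.
by apply/negbTE; apply: contra nic => /eqP /val_inj ->.
Qed.

Lemma hamming_dir_lt x y : hamming_adj x y -> hamming_dir x y < m.
Proof.
case/hamming_adjP=> c [xyc _ _]; rewrite /hamming_dir.
by case: pickP => [j _ | /(_ c)]; [exact: ltn_ord | rewrite xyc].
Qed.

Lemma set_coord_neq x i a : a != x i -> x != set_coord x (i, a).
Proof. by move=> nax; apply: contra nax => /eqP/ffunP/(_ i); rewrite ffunE eqxx => ->. Qed.

Lemma hamming_adj_same_dir x y z : hamming_adj x y -> hamming_adj x z ->
  hamming_dir x y = hamming_dir x z ->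
  exists i, [/\ y = set_coord x (i, y i), z = set_coord x (i, z i), x i != y i & x i != z i].
Proof.
move=> xy xz same_dir; pose i := Ordinal (hamming_dir_lt xy).
have xyi : x i != y i by rewrite -hamming_dirE.
have xzi : x i != z i by rewrite -hamming_dirE // -same_dir.
have [c [_ Ey /(_ i xyi) ci]] := hamming_adjP xy.
have [c' [_ Ez /(_ i xzi) c'i]] := hamming_adjP xz.
by exists i; subst c c'.
Qed.

Lemma hamming_no_unique_colour : no_unique_colour_on_cycles hamming_adj hamming_dir.
Proof.
move=> p [_ up cyc] col; rewrite /cycle_colour_count.
have adj_next x : x \in p -> hamming_adj x (next p x) by move/(next_cycle cyc).
case: (ltnP col m) => [col_lt | col_ge].
  rewrite (@eq_in_count _ _ (fun x => x (Ordinal col_lt) != next p x (Ordinal col_lt))).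
    exact: cycle_changes_neq1.
  by move=> x /adj_next /(hamming_dirE (Ordinal col_lt)).
rewrite (@eq_in_count _ _ pred0) ?count_pred0 // => x /adj_next /hamming_dir_lt dir_lt.
by apply/negbTE; rewrite neq_ltn (leq_trans dir_lt).
Qed.

Definition walk_of L (w : word m n * L.-tuple ('I_m * 'I_n)) : seq (word m n) :=
  w.1 :: scanl set_coord w.1 w.2.

Lemma size_walk_of L (w : word m n * L.-tuple ('I_m * 'I_n)) : size (walk_of w) = L.+1.
Proof. by rewrite /= size_scanl size_tuple. Qed.

Lemma walk_ofP x s : path hamming_adj x s ->
  exists w : word m n * (size s).-tuple ('I_m * 'I_n), walk_of w = x :: s.
Proof.
move=> xs; have [st <-] : exists st, scanl set_coord x st = s.
  elim: s x xs => [|y s IH] x /=; first by exists [::].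
  case/andP=> /hamming_adjP[c [_ Ey _]] /IH[st Est].
  by exists ((c, y c) :: st); rewrite /= -Ey Est.
by rewrite size_scanl; exists (x, in_tuple st).
Qed.

Definition arcs_in (S : {set word m n}) :=
  [set a : word m n * word m n | [&& a.1 \in S, a.2 \in S & hamming_adj a.1 a.2]].

Definition edges_in (S : {set word m n}) :=
  [set a : word m n * word m n |
    [&& a.1 \in S, a.2 \in S, hamming_adj a.1 a.2 & rank_lt a.1 a.2]].

Lemma card_arcs_in (S : {set word m n}) : #|arcs_in S| <= 2 * #|edges_in S|.
Proof.
apply: (@leq_trans #|edges_in S :|: [set (a.2, a.1) | a in edges_in S]|).
  apply: subset_leq_card; apply/subsetP => -[x y]; rewrite !inE /= => /and3P[xS yS xy].
  have nxy : x != y by apply: contraTneq xy => ->; rewrite hamming_adj_irr.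
  case/orP: (rank_lt_total nxy) => lt_xy; first by rewrite xS yS xy lt_xy.
  by apply/orP; right; apply/imsetP; exists (y, x); rewrite // inE /= xS yS hamming_adjC xy.
by apply: leq_trans (leq_card_setU _ _) _; rewrite mul2n -addnn leq_add2l leq_imset_card.
Qed.

End HammingGraph.

Section LineMates.

Variables m q : nat.
Implicit Types (x y : word m q.+1) (S : {set word m q.+1}).

Definition same_line (i : 'I_m) x y := [forall j, (j != i) ==> (x j == y j)].

Definition has_line_mate S i x := [exists y in S, (y != x) && same_line i x y].

Lemma same_line_adj i x y : y != x -> same_line i x y -> hamming_adj x y /\ x i != y i.
Proof.
move=> nyx /forallP line_xy.
have xyi : x i != y i.
  apply: contra nyx => /eqP xyi; apply/eqP/ffunP => j.
  by case: (eqVneq j i) => [-> // | nji]; have /implyP/(_ nji)/eqP := line_xy j.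
split=> //; apply/existsP; exists i; rewrite xyi; apply/forallP => j.
by apply/implyP; apply: contraR => nji; have /implyP/(_ nji) := line_xy j.
Qed.

(* Clearing coordinate [i] is injective on the words of [S] without a line mate in direction [i]. *)
Lemma card_no_line_mate S i : #|[set x in S | ~~ has_line_mate S i x]| <= q.+1 ^ (m - 1).
Proof.
have := card_ffun_restricted (pred1 i) (pred1 (@ord0 q)).
rewrite !card1 exp1n mul1n !card_ord => <-.
rewrite -[#|[set x in S | _]|](@card_in_imset _ _ (fun x => set_coord x (i, ord0))).
  apply: subset_leq_card; apply/subsetP => _ /imsetP[x _ ->]; rewrite inE.
  by apply/forallP => j; apply/implyP => /eqP ->; rewrite ffunE eqxx.
move=> x y; rewrite !inE => /andP[xS /existsP no_mate] /andP[yS _] Exy.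
case: (eqVneq x y) => // nxy; case: no_mate; exists y; rewrite yS eq_sym nxy.
apply/forallP => j; apply/implyP => /negbTE nji.
by move/ffunP: Exy => /(_ j); rewrite !ffunE /= nji => ->.
Qed.

Lemma card_line_mates S i : #|S| - q.+1 ^ (m - 1) <= #|[set x in S | has_line_mate S i x]|.
Proof.
rewrite leq_subLR; apply: leq_trans (leq_add (card_no_line_mate S i) (leqnn _)).
rewrite -cardsUI; apply: leq_trans (leq_addr _ _); apply: subset_leq_card.
by apply/subsetP => x xS; rewrite !inE xS orNb.
Qed.

(* Line mates of [x] in different directions are different neighbours of [x]. *)
Lemma card_line_mates_arcs S :
  #|[set xi : word m q.+1 * 'I_m | (xi.1 \in S) && has_line_mate S xi.2 xi.1]| <= #|arcs_in S|.
Proof.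
pose mate xi := odflt xi.1 [pick y in S | (y != xi.1) && same_line xi.2 xi.1 y].
have mateP xi : (xi.1 \in S) && has_line_mate S xi.2 xi.1 ->
    [/\ mate xi \in S, mate xi != xi.1 & same_line xi.2 xi.1 (mate xi)].
  case/andP=> _ /existsP[y /and3P[yS nyx line_xy]]; rewrite /mate.
  by case: pickP => [z /and3P[] | /(_ y)] //=; rewrite yS nyx line_xy.
rewrite -[#|[set xi | _]|](@card_in_imset _ _ (fun xi => (xi.1, mate xi))).
  apply: subset_leq_card; apply/subsetP => _ /imsetP[xi + ->]; rewrite inE => xiS.
  have [mS nmx line] := mateP xi xiS; have [adj _] := same_line_adj nmx line.
  by rewrite inE /= mS adj; case/andP: xiS => ->.
move=> [x i] [x' j]; rewrite !inE /= => xiS xjS [Exx' Emate]; subst x'.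
have [_ nmx line_i] := mateP (x, i) xiS; have [_ _ line_j] := mateP (x, j) xjS.
have [_ /= xmi] := same_line_adj nmx line_i.
case: (eqVneq i j) => [-> // | nij].
by move/forallP: line_j => /(_ i); rewrite /= -Emate nij /= (negbTE xmi).
Qed.

Lemma card_edges_in S : 2 * q.+1 ^ (m - 1) <= #|S| -> m * q.+1 ^ (m - 1) <= 2 * #|edges_in S|.
Proof.
move=> S_large; apply: leq_trans (card_arcs_in S); apply: leq_trans (card_line_mates_arcs S).
rewrite (card_set_pair (fun x i => (x \in S) && has_line_mate S i x)).
apply: (@leq_trans (\sum_(i : 'I_m) (#|S| - q.+1 ^ (m - 1)))); last first.
  by apply: leq_sum => i _; apply: card_line_mates.
rewrite sum_nat_const card_ord leq_mul2l leq_subRL; last first.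
  by apply: leq_trans S_large; rewrite leq_pmull.
by rewrite addnn -mul2n S_large orbT.
Qed.

End LineMates.

Notation sample m n Q := {ffun word m n * word m n -> 'I_Q.+1}.

Definition nbad_weight n g := \sum_(L < g) (4 * n ^ 2) ^ L + 4 * n ^ 3.

Section Samples.

Variables m n Q : nat.

Local Notation npairs := #|{: word m n * word m n}|.
Implicit Types (r : sample m n Q) (x y z : word m n) (S : {set word m n}).

Definition kept r x y := hamming_adj x y && (r (edge_key x y) == ord0).

Lemma kept_simple r : simple_graph (kept r).
Proof.
split=> [x y | x]; last by rewrite /kept hamming_adj_irr.
by rewrite /kept hamming_adjC edge_keyC.
Qed.

(* Cycles with [L.+1] vertices, encoded by their first vertex and [L] moves. *)
Definition kept_cycles r L :=
  [set w : word m n * L.-tuple ('I_m * 'I_n) |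
    uniq (walk_of w) && all (fun a => r a == ord0) (cycle_keys (walk_of w))].

(* [(x, i, a, b)] stands for the two edges from [x] to [set_coord x (i, a)] and
   [set_coord x (i, b)], which get the same colour [i]. *)
Definition cherry := (word m n * 'I_m * 'I_n * 'I_n)%type.

Definition is_cherry (w : cherry) :=
  let: (x, i, a, b) := w in [&& a != b, a != x i & b != x i].

Definition cherry_keys (w : cherry) :=
  let: (x, i, a, b) := w in
  [:: edge_key x (set_coord x (i, a)); edge_key x (set_coord x (i, b))].

Definition kept_cherries r :=
  [set w : cherry | is_cherry w && all (fun a => r a == ord0) (cherry_keys w)].

Definition nbad g r := \sum_(L < g | 2 <= L) #|kept_cycles r L| + #|kept_cherries r|.

Definition bad_vertices g r :=
  [set x | [exists L : 'I_g, (2 <= L) && (x \in [set w.1 | w in kept_cycles r L])]]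
  :|: [set w.1.1.1 | w in kept_cherries r].

Lemma cherry_keys_uniq w : is_cherry w -> uniq (cherry_keys w).
Proof.
case: w => [[[x i] a] b] /and3P[nab nax nbx] /=; rewrite andbT inE.
apply/eqP; case/edge_key_inj => [[_ /ffunP/(_ i)] | [Ex _]].
  by rewrite !ffunE eqxx => /= Eab; rewrite Eab eqxx in nab.
by have := set_coord_neq nbx; rewrite -Ex eqxx.
Qed.

Lemma sum_kept_cycles L : 2 <= L ->
  \sum_r #|kept_cycles r L| <= n ^ m * (m * n) ^ L * Q.+1 ^ (npairs - L.+1).
Proof.
move=> L_ge2; rewrite double_count.
apply: (@leq_trans (\sum_(w : word m n * L.-tuple ('I_m * 'I_n)) Q.+1 ^ (npairs - L.+1)));
  last by rewrite sum_nat_const card_prod card_ffun card_tuple card_prod !card_ord.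
apply: leq_sum => w _; case uw : (uniq (walk_of w)); last first.
  by rewrite eq_card0 // => r; rewrite !inE.
have <- : size (cycle_keys (walk_of w)) = L.+1 by rewrite size_map size_walk_of.
rewrite -card_ffun_pinned; last by apply: cycle_keys_uniq; rewrite ?size_walk_of.
by apply: subset_leq_card; apply/subsetP => r; rewrite !inE.
Qed.

Lemma sum_kept_cherries :
  \sum_r #|kept_cherries r| <= n ^ m * m * n * n * Q.+1 ^ (npairs - 2).
Proof.
rewrite double_count.
apply: (@leq_trans (\sum_(w : cherry) Q.+1 ^ (npairs - 2)));
  last by rewrite sum_nat_const !card_prod card_ffun !card_ord.
apply: leq_sum => w _; case cw : (is_cherry w); last first.
  by rewrite eq_card0 // => r; rewrite !inE.
have <- : size (cherry_keys w) = 2 by case: w {cw} => [[[]]].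
rewrite -card_ffun_pinned; last exact: cherry_keys_uniq.
by apply: subset_leq_card; apply/subsetP => r; rewrite !inE.
Qed.

Lemma sum_nbad g : m = 4 * n * Q.+1 -> g.+1 < npairs ->
  \sum_r nbad g r <= n ^ m * nbad_weight n g * Q.+1 ^ (npairs - 1).
Proof.
move=> def_m g_lt; have mn : m * n = 4 * n ^ 2 * Q.+1 by rewrite def_m; lia.
rewrite big_split exchange_big /= mulnDr mulnDl; apply: leq_add.
  rewrite big_distrr big_distrl /= [X in _ <= X](bigID (fun L : 'I_g => 2 <= L)) /=.
  apply: leq_trans (leq_addr _ _); apply: leq_sum => L L_ge2.
  apply: leq_trans (sum_kept_cycles L_ge2) _.
  rewrite mn expnMn -!mulnA; do 2 apply: leq_mul => //.
  by rewrite -expnD; apply: leq_pexp2l => //; move: (ltn_ord L) g_lt; lia.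
apply: leq_trans sum_kept_cherries _.
have -> : Q.+1 ^ (npairs - 1) = Q.+1 * Q.+1 ^ (npairs - 2).
  by rewrite -expnS; congr (_ ^ _); move: g_lt; lia.
rewrite def_m; move: (n ^ m) (Q.+1 ^ _) => a b; lia.
Qed.

Lemma card_nbad_large g : 0 < n -> m = 4 * n * Q.+1 -> g.+1 < npairs ->
  8 * nbad_weight n g <= Q -> 4 * #|[set r | n ^ m <= 2 * nbad g r]| <= Q.+1 ^ npairs.
Proof.
move=> n_gt0 def_m g_lt weight_le.
have : n ^ m * #|[set r | n ^ m <= 2 * nbad g r]|
         <= 2 * (n ^ m * nbad_weight n g * Q.+1 ^ (npairs - 1)).
  apply: leq_trans (card_geq_le_sum (fun r => 2 * nbad g r) _) _.
  by rewrite -big_distrr leq_mul2l sum_nbad ?orbT.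
rewrite -!mulnA mulnCA leq_pmul2l ?expn_gt0 ?n_gt0 // => card_le.
have -> : Q.+1 ^ npairs = Q.+1 * Q.+1 ^ (npairs - 1).
  by rewrite -expnS; congr (_ ^ _); move: g_lt; lia.
apply: leq_trans (leq_mul (leqnn 4) card_le) _; rewrite !mulnA leq_mul2r.
by apply/orP; right; move: weight_le; lia.
Qed.

Definition independent r S := [forall x in S, forall y in S, ~~ kept r x y].

Lemma card_independent S :
  #|[set r | independent r S]| <= Q ^ #|edges_in S| * Q.+1 ^ (npairs - #|edges_in S|).
Proof.
have := card_ffun_restricted (mem (edges_in S)) (predC1 (@ord0 Q)).
rewrite cardC1 !card_ord => <-.
apply: subset_leq_card; apply/subsetP => r; rewrite !inE => /forall_inP indep_S.
apply/forall_inP => -[x y]; rewrite inE /= => /and4P[xS yS xy lt_xy].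
by have /forall_inP/(_ y yS) := indep_S x xS; rewrite /kept xy /edge_key lt_xy.
Qed.

Lemma card_independent_large t E : 0 < Q -> Q * (n ^ m).+1 <= E -> E <= npairs ->
  (forall S, t <= #|S| -> E <= #|edges_in S|) ->
  2 * #|[set r : sample m n Q | [exists S : {set word m n}, (t <= #|S|) && independent r S]]|
    <= Q.+1 ^ npairs.
Proof.
move=> Q_gt0 QN_le E_le edges_ge.
apply: leq_trans (mixed_pow_small Q_gt0 QN_le E_le).
rewrite expnS -mulnA leq_mul2l; apply/orP; right.
apply: leq_trans (card_set_exists_le _) _.
have -> : n ^ m = #|word m n| by rewrite card_ffun !card_ord.
rewrite -card_sets -sum1_card big_distrl /=; apply: leq_sum => S _; rewrite mul1n.
case: (leqP t #|S|) => [S_large | _]; last first.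
  by rewrite eq_card0 // => r; rewrite !inE.
apply: leq_trans (mixed_pow_antimono _ (edges_ge S S_large) (max_card _)).
apply: leq_trans (card_independent S).
by apply: subset_leq_card; apply/subsetP => r; rewrite !inE.
Qed.

Lemma card_bad_vertices g r : #|bad_vertices g r| <= nbad g r.
Proof.
apply: leq_trans (leq_card_setU _ _) _; apply: leq_add; last exact: leq_imset_card.
apply: leq_trans (card_set_exists_le _) _; rewrite [X in _ <= X]big_mkcond.
apply: leq_sum => L _; case: ifP => _; last first.
  by rewrite eq_card0 // => x; rewrite !inE.
apply: leq_trans (leq_imset_card (fun w => w.1) (kept_cycles r L)).
by apply: subset_leq_card; apply/subsetP => x; rewrite inE => /andP[].
Qed.

Lemma kept_cycle_bad g r x s : is_graph_cycle (kept r) (x :: s) -> size s < g ->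
  x \in bad_vertices g r.
Proof.
move=> [s_ge2 uxs cyc] s_lt; rewrite /= ltnS in s_ge2.
have /walk_ofP[w Ew] : path (@hamming_adj m n) x s.
  move: cyc; rewrite /= rcons_path => /andP[+ _].
  by apply: sub_path => a b /andP[].
rewrite inE; apply/orP; left; rewrite inE; apply/existsP; exists (Ordinal s_lt).
rewrite s_ge2; apply/imsetP; exists w; last by case: Ew.
rewrite inE Ew uxs; apply/allP => _ /mapP[y ys ->].
by have /andP[] := next_cycle cyc ys.
Qed.

Lemma kept_same_dir_bad g r x y z : kept r x y -> kept r x z -> y != z ->
  hamming_dir x y = hamming_dir x z -> x \in bad_vertices g r.
Proof.
move=> /andP[xy kxy] /andP[xz kxz] nyz same_dir.
have [i [Ey Ez xyi xzi]] := hamming_adj_same_dir xy xz same_dir.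
rewrite inE; apply/orP; right; apply/imsetP; exists (x, i, y i, z i) => //.
rewrite inE /= -Ey -Ez kxy kxz !(eq_sym _ (x i)) xyi xzi !andbT.
by apply: contra nyz => /eqP yzi; rewrite Ey Ez yzi.
Qed.

End Samples.

Section Survivors.

Variables (m n Q g : nat) (r : sample m n Q).

Definition survivor := {x : word m n | x \notin bad_vertices g r}.

Definition survivor_adj : rel survivor := fun x y => kept r (val x) (val y).

Definition survivor_colour (x y : survivor) := hamming_dir (val x) (val y).

Lemma card_survivor : #|{: survivor}| + #|bad_vertices g r| = n ^ m.
Proof.
have -> : n ^ m = #|word m n| by rewrite card_ffun !card_ord.
rewrite card_sig -(cardsC (bad_vertices g r)) addnC; congr (_ + _).
by apply: eq_card => x; rewrite !inE.
Qed.

Lemma survivor_simple : simple_graph survivor_adj.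
Proof.
by have [adjC adj_irr] := kept_simple r; split=> [x y | x]; [apply: adjC | apply: adj_irr].
Qed.

Lemma survivor_girth : girth_ge survivor_adj g.
Proof.
move=> p cyc; rewrite leqNgt; apply/negP => p_short.
have := graph_cycle_map val_inj (e' := kept r) (fun _ _ => id) cyc.
case: p cyc p_short => [[] // | x s] _ p_short kept_cyc.
by have := valP x; rewrite (kept_cycle_bad (s := map val s) kept_cyc) // size_map ltnW.
Qed.

Lemma survivor_colour_proper : proper_ecolouring survivor_adj survivor_colour.
Proof.
split=> [x y _ | x y z xy xz nyz]; first exact: hamming_dirC.
apply/eqP => same_dir; have := valP x.
by rewrite (kept_same_dir_bad g xy xz _ same_dir) ?val_eqE.
Qed.

Lemma survivor_no_unique_colour : no_unique_colour_on_cycles survivor_adj survivor_colour.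
Proof.
by apply: (no_unique_colour_map val_inj _ (@hamming_no_unique_colour m n)) => x y /andP[].
Qed.

Lemma survivor_chromatic k P : n ^ m = 4 * k * P -> 2 * nbad g r < n ^ m ->
  (forall S : {set word m n}, 2 * P <= #|S| -> ~~ independent r S) ->
  chromatic_ge survivor_adj k.
Proof.
move=> NE few_bad no_large_indep; apply: (@chromatic_ge_indep _ _ _ (2 * P)).
  move=> S indep_S; rewrite ltnNge -(card_imset _ val_inj).
  apply: (contraL (no_large_indep _)).
  apply/forall_inP => _ /imsetP[x xS ->]; apply/forall_inP => _ /imsetP[y yS ->].
  exact: indep_S.
move: few_bad (card_bad_vertices g r) card_survivor; rewrite NE.
by move: (nbad g r) #|bad_vertices g r| #|{: survivor}| => nb b s; nia.
Qed.

End Survivors.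

Lemma good_sample_exists m q Q g : m = 4 * q.+1 * Q.+1 ->
  0 < q -> 0 < Q -> g <= Q -> 8 * nbad_weight q.+1 g <= Q ->
  exists r : sample m q.+1 Q,
    2 * nbad g r < q.+1 ^ m /\
    forall S : {set word m q.+1}, 2 * q.+1 ^ (m - 1) <= #|S| -> ~~ independent r S.
Proof.
move=> def_m q_gt0 Q_gt0 g_le weight_le.
set N := q.+1 ^ m; set P := q.+1 ^ (m - 1).
have npairsE : #|{: word m q.+1 * word m q.+1}| = N * N.
  by rewrite card_prod card_ffun !card_ord.
have NE : N = q.+1 * P by rewrite /N /P -expnS subn1 prednK // def_m.
have m_lt : m < N by rewrite ltn_expl.
pose B1 := [set r : sample m q.+1 Q | N <= 2 * nbad g r].
pose B2 := [set r : sample m q.+1 Q |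
             [exists S : {set word m q.+1}, (2 * P <= #|S|) && independent r S]].
have B1_small : 4 * #|B1| <= Q.+1 ^ (N * N).
  by rewrite -npairsE card_nbad_large // npairsE; nia.
have B2_small : 2 * #|B2| <= Q.+1 ^ (N * N).
  rewrite -npairsE (card_independent_large (E := 2 * Q.+1 * N)) // ?npairsE; try nia.
  move=> S /card_edges_in; rewrite -/P; nia.
have : #|B1 :|: B2| < #|{: sample m q.+1 Q}|.
  rewrite card_ffun card_ord npairsE; apply: leq_ltn_trans (leq_card_setU _ _) _.
  by move: B1_small B2_small (expn_gt0 Q.+1 (N * N)); lia.
rewrite -(cardsC (B1 :|: B2)) -addn1 leq_add2l => /card_gt0P[r].
rewrite !inE negb_or -ltnNge => /andP[few_bad /existsPn no_large_indep].
by exists r; split=> // S S_large; have := no_large_indep S; rewrite S_large.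
Qed.

Theorem theorem1p1 (g k : nat) (hg : 0 < g) (hk : 0 < k) :
  exists (T : finType) (e : rel T),
    [/\ simple_graph e, girth_ge e g, chromatic_ge e k &
        exists c : T -> T -> nat, proper_ecolouring e c /\ no_unique_colour_on_cycles e c].
Proof.
pose q := 4 * k - 1; pose Q := 8 * nbad_weight q.+1 g + g; pose m := 4 * q.+1 * Q.+1.
have [] := @good_sample_exists m q Q g erefl; try by rewrite /Q /q; lia.
move=> r [few_bad no_large_indep].
exists _, (@survivor_adj _ _ _ g r); split.
- exact: survivor_simple.
- exact: survivor_girth.
- apply: (survivor_chromatic _ few_bad no_large_indep).
  have q_succ : q.+1 = 4 * k by rewrite /q; lia.
  by rewrite -[4 * k]q_succ -expnS subn1 prednK.
- exists (@survivor_colour _ _ _ g r); split.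
    exact: survivor_colour_proper.
  exact: survivor_no_unique_colour.
Qed.
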